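(* Let $A=\mathbb C\langle u^{\pm1},v^{\pm1}\rangle$ and $h=u+v+u^{-1}+v^{-1}+u^{-1}v^{-1}$. The elements $\pi(h^k)$, $k=1,2,3,\dots$, of $A/[A,A]$ are linearly independent over $\mathbb C$.
   Context: $A$ is the group algebra over $\mathbb C$ of the free group on two generators $u,v$; $[A,A]$ is the linear span of all $ab-ba$, $a,b\in A$; $\pi:A\to A/[A,A]$ is the natural projection. *)

From HB Require Import structures.
From mathcomp Require Import all_boot all_order all_algebra.
From mathcomp Require Import complex.
From mathcomp Require Import Rstruct.
From Stdlib Require Import Rdefinitions.
Set Implicit Arguments. Unset Strict Implicit. Unset Printing Implicit Defensive.
Import GRing.Theory.
Local Open Scope ring_scope.

Definition CC : comNzRingType := (complex Rdefinitions.R : comNzRingType).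

(* Letters of the free group F_2 on u, v: (generator, inverted?)
   generator false = u, true = v. *)
Definition letter := (bool * bool)%type.
Definition lu : letter := (false, false).
Definition lui : letter := (false, true).
Definition lv : letter := (true, false).
Definition lvi : letter := (true, true).
Definition linv (x : letter) : letter := (x.1, ~~ x.2).

(* Free reduction of words: elements of F_2 are reduced words. *)
Definition cons_red (x : letter) (w : seq letter) : seq letter :=
  match w with
  | y :: w' => if y == linv x then w' else x :: w
  | [::] => [:: x]
  end.
Definition reduce (w : seq letter) : seq letter := foldr cons_red [::] w.

(* Elements of the group algebra A = C[F_2], given as finite formal sums
   sum_i c_i g_i, encoded by a list of pairs (c_i, g_i). *)
Definition galg := seq (CC * seq letter)%type.

Definition coef (a : galg) (g : seq letter) : CC :=
  \sum_(p <- a | reduce p.2 == g) p.1.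

Definition aeq (a b : galg) : Prop := forall g, coef a g = coef b g.

Definition aadd (a b : galg) : galg := a ++ b.
Definition ascale (c : CC) (a : galg) : galg := [seq (c * p.1, p.2) | p <- a].
Definition asub (a b : galg) : galg := aadd a (ascale (-1) b).
Definition amul (a b : galg) : galg :=
  [seq (p.1 * q.1, reduce (p.2 ++ q.2)) | p <- a, q <- b].
Definition aone : galg := [:: (1, [::])].
Definition apow (a : galg) (k : nat) : galg := iter k (amul a) aone.
Definition asum (s : seq galg) : galg := flatten s.

Definition in_commutator (x : galg) : Prop :=
  exists s : seq (CC * galg * galg),
    aeq x (asum [seq ascale t.1.1 (asub (amul t.1.2 t.2) (amul t.2 t.1.2)) | t <- s]).

Definition hh : galg :=
  [:: (1, [:: lu]); (1, [:: lv]); (1, [:: lui]); (1, [:: lvi]); (1, [:: lui; lvi])].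

From mathcomp Require Import all_boot all_order all_algebra.
From mathcomp Require Import zify.
Import Order.TTheory GRing.Theory.
Local Open Scope ring_scope.

(* The exponent sum in u is a homomorphism F_2 -> Z, so the functional
   tau_m(a) := sum of the coefficients of a on group elements of u-degree m
   factors through the commutative algebra C[Z]; hence tau_m(ab) = tau_m(ba)
   and tau_m vanishes on [A,A].  The terms of h have u-degree 1 (only u),
   0 or -1, so h^k has u-degree at most k and tau_k(h^k) = 1.  The matrix
   (tau_m(h^k)) is therefore unitriangular, and a combination of the h^k lying
   in [A,A] must have all coefficients zero. *)

Definition udeg_letter (x : letter) : int :=
  if x.1 then 0 else if x.2 then -1 else 1.

Definition udeg (w : seq letter) : int := \sum_(x <- w) udeg_letter x.

Lemma udeg_cons x w : udeg (x :: w) = udeg_letter x + udeg w.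
Proof. by rewrite /udeg big_cons. Qed.

Lemma udeg_cat w1 w2 : udeg (w1 ++ w2) = udeg w1 + udeg w2.
Proof. by rewrite /udeg big_cat. Qed.

Lemma udeg_linv x : udeg_letter (linv x) = - udeg_letter x.
Proof. by case: x => [[] []]. Qed.

Lemma udeg_cons_red x w : udeg (cons_red x w) = udeg (x :: w).
Proof.
case: w => [|y w] //=; case: ifP => [/eqP -> | _] //.
by rewrite !udeg_cons udeg_linv addrA addrN add0r.
Qed.

Lemma udeg_reduce w : udeg (reduce w) = udeg w.
Proof.
elim: w => [|x w IHw] //=.
by rewrite [reduce _]/= udeg_cons_red !udeg_cons -IHw.
Qed.

Definition coef_udeg (m : int) (a : galg) : CC :=
  \sum_(p <- a | udeg p.2 == m) p.1.

Lemma coef_udegE m a (S : seq (seq letter)) :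
  uniq S -> {subset [seq reduce p.2 | p <- a] <= S} ->
  coef_udeg m a = \sum_(g <- S | udeg g == m) coef a g.
Proof.
move=> uniqS aS; rewrite /coef_udeg /coef big_mkcond.
under [RHS]eq_bigr do rewrite big_mkcond.
rewrite exchange_big; apply: eq_big_seq => p ap.
have pS : reduce p.2 \in S by apply: aS; apply: map_f.
rewrite big_mkcond (bigD1_seq (reduce p.2)) // eqxx udeg_reduce big1 ?Monoid.mulm1 //.
by move=> g /negbTE; rewrite eq_sym => ->; case: ifP.
Qed.

Lemma coef_udeg_aeq m a b : aeq a b -> coef_udeg m a = coef_udeg m b.
Proof.
move=> eq_ab; pose reds (c : galg) := [seq reduce p.2 | p <- c].
set S := undup (reds a ++ reds b).
have uniqS : uniq S by apply: undup_uniq.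
have sub_a : {subset reds a <= S} by move=> g; rewrite mem_undup mem_cat => ->.
have sub_b : {subset reds b <= S} by move=> g; rewrite mem_undup mem_cat orbC => ->.
rewrite (coef_udegE m a S uniqS sub_a) (coef_udegE m b S uniqS sub_b).
by apply: eq_bigr => g _; apply: eq_ab.
Qed.

Lemma coef_udeg_cat m a b : coef_udeg m (a ++ b) = coef_udeg m a + coef_udeg m b.
Proof. by rewrite /coef_udeg big_cat. Qed.

Lemma coef_udeg_scale m c a : coef_udeg m (ascale c a) = c * coef_udeg m a.
Proof. by rewrite /coef_udeg big_map mulr_sumr. Qed.

Lemma coef_udeg_asum_map m (T : Type) (f : T -> galg) (r : seq T) :
  coef_udeg m (asum [seq f x | x <- r]) = \sum_(x <- r) coef_udeg m (f x).
Proof.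
elim: r => [|x r IHr]; first by rewrite /coef_udeg !big_nil.
by rewrite big_cons -IHr /asum /= coef_udeg_cat.
Qed.

Lemma coef_udeg_amul m a b : coef_udeg m (amul a b) =
  \sum_(p <- a) \sum_(q <- b) (if udeg p.2 + udeg q.2 == m then p.1 * q.1 else 0).
Proof.
rewrite /coef_udeg /amul big_mkcond big_allpairs_dep /=.
by apply: eq_bigr => p _; apply: eq_bigr => q _; rewrite udeg_reduce udeg_cat.
Qed.

Lemma coef_udeg_amulC m a b : coef_udeg m (amul a b) = coef_udeg m (amul b a).
Proof.
rewrite !coef_udeg_amul exchange_big /=.
by apply: eq_bigr => p _; apply: eq_bigr => q _; rewrite addrC mulrC.
Qed.

Lemma coef_udeg_amull m a b :
  coef_udeg m (amul a b) = \sum_(p <- a) p.1 * coef_udeg (m - udeg p.2) b.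
Proof.
rewrite coef_udeg_amul; apply: eq_bigr => p _.
rewrite /coef_udeg mulr_sumr [RHS]big_mkcond; apply: eq_bigr => q _ /=.
rewrite [udeg q.2 == _]eq_sym subr_eq eq_sym addrC.
by case: ifP; rewrite ?mulr0.
Qed.

Lemma coef_udeg_commutator m x : in_commutator x -> coef_udeg m x = 0.
Proof.
move=> [s /(coef_udeg_aeq m) ->]; rewrite coef_udeg_asum_map big1 // => t _.
rewrite coef_udeg_scale /asub /aadd coef_udeg_cat coef_udeg_scale.
by rewrite coef_udeg_amulC mulN1r subrr mulr0.
Qed.

Lemma coef_udeg_amul_hh m a : coef_udeg m (amul hh a) =
  coef_udeg (m - 1) a + coef_udeg m a + coef_udeg (m + 1) a
  + coef_udeg m a + coef_udeg (m + 1) a.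
Proof.
rewrite coef_udeg_amull /hh !big_cons big_nil /= /udeg !big_cons big_nil /=.
by rewrite /udeg_letter /= !mul1r !addr0 ?subr0 !opprK !addrA.
Qed.

Lemma coef_udeg_pow_hh_gt k m : k%:Z < m -> coef_udeg m (apow hh k) = 0.
Proof.
elim: k m => [|k IHk] m lt_km.
  by rewrite /coef_udeg big_cons big_nil /udeg big_nil (lt_eqF lt_km).
by rewrite [apow _ _]/= coef_udeg_amul_hh !IHk ?addr0 //; lia.
Qed.

Lemma coef_udeg_pow_hh k : coef_udeg k%:Z (apow hh k) = 1.
Proof.
elim: k => [|k IHk]; first by rewrite /coef_udeg big_cons big_nil /udeg big_nil eqxx addr0.
rewrite [apow _ _]/= coef_udeg_amul_hh.
have -> : k.+1%:Z - 1 = k by lia.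
by rewrite IHk !coef_udeg_pow_hh_gt ?addr0 //; lia.
Qed.

Lemma unitriangular_comb_eq0 (R : pzSemiRingType) n (c : 'I_n -> R)
    (a : nat -> nat -> R) :
  (forall m k, (k < m)%N -> a m k = 0) -> (forall k, a k k = 1) ->
  (forall m, \sum_(k < n) c k * a m k = 0) -> forall k, c k = 0.
Proof.
move=> a_lower a_diag comb0 k.
elim: {k}(n - k)%N {-2}k (leqnn (n - k)) => [|d IHd] k le_nk_d.
  by have := ltn_ord k; lia.
have := comb0 k; rewrite (bigD1 k) //= a_diag mulr1 big1 ?addr0 // => j ne_jk.
have [lt_jk | le_kj] := ltnP j k; first by rewrite a_lower ?mulr0.
have ne_val_jk : nat_of_ord j != k by [].
by rewrite IHd ?mul0r //; lia.
Qed.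

Theorem mainTheorem4 :
  forall (n : nat) (c : 'I_n -> CC),
    in_commutator (asum [seq ascale (c k) (apow hh k.+1) | k <- enum 'I_n]) ->
    forall k : 'I_n, c k = 0.
Proof.
move=> n c comm_c.
apply: (@unitriangular_comb_eq0 _ _ c (fun m k => coef_udeg m.+1 (apow hh k.+1))).
- by move=> m k lt_km; apply: coef_udeg_pow_hh_gt; lia.
- by move=> k; apply: coef_udeg_pow_hh.
move=> m; apply: etrans (coef_udeg_commutator m.+1 _ comm_c).
rewrite coef_udeg_asum_map big_enum /=.
by apply: eq_bigr => k _; rewrite coef_udeg_scale.
Qed.
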